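(* For every profile $P$: $|\mathit{TC}(P)|=1$ if and only if all agents have pairwise distinct top choices. Analogously, $|\mathit{BC}(P)|=1$ if and only if all agents have pairwise distinct bottom choices.
   Context: Let $N=\{1,\dots,n\}$ be agents and $H$ a set of $n$ houses. A profile $P=(\succ_1,\dots,\succ_n)$ gives each agent a strict linear order on $H$; an agent's top (bottom) choice is the house she ranks first (last). An assignment is a bijection $N\to H$; $M$ is the set of assignments. Agent $x$ weakly prefers $\mu$ to $\lambda$ if $\mu(x)\succ_x\lambda(x)$ or $\mu(x)=\lambda(x)$. $N_{\mu,\lambda}$ is the set of agents weakly preferring $\mu$ to $\lambda$; $\mu\succsim\lambda$ if $|N_{\mu,\lambda}|\ge|N_{\lambda,\mu}|$, and $\succsim^*$ is its transitive closure. $\mathit{TC}(P)=\{\mu\in M:\mu\succsim^*\lambda\ \forall\lambda\in M\}$, $\mathit{BC}(P)=\{\mu\in M:\lambda\succsim^*\mu\ \forall\lambda\in M\}$. *)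

From mathcomp Require Import all_boot all_order.
Set Implicit Arguments. Unset Strict Implicit. Unset Printing Implicit Defensive.

(* Agents: finite type N; houses: finite type H with #|H| = #|N| (= n).
   A profile gives each agent x a relation [P x : rel H], where [P x a b]
   means "x strictly prefers a to b". *)
Definition strict_linear_order (H : finType) (r : rel H) : Prop :=
  irreflexive r /\ transitive r /\ (forall a b, a != b -> r a b || r b a).

Definition is_profile (N H : finType) (P : N -> rel H) : Prop :=
  forall x, strict_linear_order (P x).

Definition is_top (N H : finType) (P : N -> rel H) (x : N) (h : H) : Prop :=
  forall h', h' != h -> P x h h'.
Definition is_bottom (N H : finType) (P : N -> rel H) (x : N) (h : H) : Prop :=
  forall h', h' != h -> P x h' h.

Definition distinct_tops (N H : finType) (P : N -> rel H) : Prop :=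
  forall x y hx hy, is_top P x hx -> is_top P y hy -> x != y -> hx != hy.
Definition distinct_bottoms (N H : finType) (P : N -> rel H) : Prop :=
  forall x y hx hy, is_bottom P x hx -> is_bottom P y hy -> x != y -> hx != hy.

(* assignments: bijections N -> H (injective maps, since #|N| = #|H|) *)
Definition assignments (N H : finType) : {set {ffun N -> H}} :=
  [set mu : {ffun N -> H} | injectiveb mu].

Definition Nwp (N H : finType) (P : N -> rel H) (mu lam : {ffun N -> H}) : {set N} :=
  [set x | P x (mu x) (lam x) || (mu x == lam x)].

Definition pop_rel (N H : finType) (P : N -> rel H) : rel {ffun N -> H} :=
  fun mu lam => [&& mu \in assignments N H, lam \in assignments N H &
                    #|Nwp P lam mu| <= #|Nwp P mu lam|].

(* transitive closure ≿* (reflexive closure is harmless: ≿ is reflexive) *)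
Definition pop_star (N H : finType) (P : N -> rel H) : rel {ffun N -> H} :=
  connect (pop_rel P).

Definition TC (N H : finType) (P : N -> rel H) : {set {ffun N -> H}} :=
  [set mu in assignments N H |
     [forall lam in assignments N H, pop_star P mu lam]].

Definition BC (N H : finType) (P : N -> rel H) : {set {ffun N -> H}} :=
  [set mu in assignments N H |
     [forall lam in assignments N H, pop_star P lam mu]].

From mathcomp Require Import all_boot all_order.
From mathcomp Require Import fingroup perm.
Set Implicit Arguments. Unset Strict Implicit. Unset Printing Implicit Defensive.

(* If the tops are pairwise distinct, giving every agent her top is an
   assignment that every agent weakly prefers to any other one; it therefore
   beats everything and is beaten by nothing but itself, so it is the whole
   top cycle.  Conversely, let mu be the unique element of the top cycle and
   let two agents share the top h.  One of them, w, does not get h; swapping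
   the houses of w and of the holder z of h makes w strictly better off and
   changes nothing for the other agents except z, so the new assignment beats
   mu and lies in the top cycle as well, a contradiction.  The bottom cycle is
   the top cycle of the reversed profile. *)

Lemma strict_linear_order_asym (T : finType) (r : rel T) :
  strict_linear_order r -> forall a b, r a b -> ~~ r b a.
Proof.
case=> irr [tr _] a b rab; apply/negP => rba.
by have := tr _ _ _ rab rba; rewrite irr.
Qed.

Lemma strict_linear_order_top (T : finType) (r : rel T) :
  strict_linear_order r -> T -> exists t, [forall t', (t' != t) ==> r t t'].
Proof.
case=> irr [tr tot] t0.
pose below t := #|[set t' | r t' t]|.
case: (arg_minnP below (isT : predT t0)) => t _ t_min.
exists t; apply/forall_inP => t' t't; case/orP: (tot _ _ t't) => // rt't.
have : below t' < below t.
  apply: proper_card; apply/properP; split.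
    by apply/subsetP => a; rewrite !inE => rat'; apply: tr rt't.
  by exists t'; rewrite !inE ?irr.
by rewrite ltnNge t_min.
Qed.

Lemma connect_into_eq (T : finType) (e : rel T) y :
  (forall x, e x y -> x = y) -> forall x, connect e x y -> x = y.
Proof.
move=> into_y x /connectP [p]; elim: p x => [|z p IHp] x /=; first by move=> _ ->.
by case/andP => exz pz /(IHp z pz) z_y; apply: into_y; rewrite -z_y.
Qed.

Definition swap_agents (N H : finType) (mu : {ffun N -> H}) (w z : N) :
  {ffun N -> H} := [ffun v => mu (tperm w z v)].

Lemma swap_agents_assignment (N H : finType) (mu : {ffun N -> H}) w z :
  mu \in assignments N H -> swap_agents mu w z \in assignments N H.
Proof.
rewrite !inE => /injectiveP inj_mu; apply/injectiveP => a b.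
by rewrite !ffunE => /inj_mu; apply: perm_inj.
Qed.

Section TopCycle.

Variables (N H : finType) (P : N -> rel H).
Hypothesis P_profile : is_profile P.

Lemma profile_asym x a b : P x a b -> ~~ P x b a.
Proof. exact: strict_linear_order_asym. Qed.

Lemma unanimous_pop_rel_eq mu lam :
  Nwp P lam mu = setT -> pop_rel P mu lam -> mu = lam.
Proof.
move=> lam_unanimous /and3P [_ _]; rewrite lam_unanimous cardsT => le_card.
have /eqP/setP mu_unanimous : Nwp P mu lam == setT.
  by rewrite eqEcard subsetT cardsT.
apply/ffunP => v; have := mu_unanimous v; rewrite !inE => /orP [Pmu|/eqP //].
have := lam_unanimous; move/setP/(_ v); rewrite !inE => /orP [Plam|/eqP //].
by rewrite (negbTE (profile_asym Pmu)) in Plam.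
Qed.

Lemma pop_rel_of_one_gain mu mu' w z :
  mu \in assignments N H -> mu' \in assignments N H ->
  P w (mu' w) (mu w) -> [set~ z] \subset Nwp P mu' mu -> pop_rel P mu' mu.
Proof.
move=> A_mu A_mu' w_gains others_weakly; rewrite /pop_rel A_mu A_mu' /=.
apply: (@leq_trans #|[set~ w]|).
  apply: subset_leq_card; apply/subsetP => v; rewrite !inE.
  apply: contraTneq => ->; rewrite (negbTE (profile_asym w_gains)) /=.
  by apply: contraTneq w_gains => ->; case: (P_profile w) => ->.
by rewrite !cardsC1 -(cardsC1 z); apply: subset_leq_card.
Qed.

Lemma pop_rel_swap_to_top mu w z h :
  mu \in assignments N H -> is_top P w h -> mu z = h -> mu w != h ->
  pop_rel P (swap_agents mu w z) mu.
Proof.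
move=> A_mu w_top mu_z mu_w.
have swap_w : swap_agents mu w z w = h by rewrite ffunE tpermL.
apply: (pop_rel_of_one_gain (w := w) (z := z) A_mu (swap_agents_assignment w z A_mu)).
  by rewrite swap_w w_top.
apply/subsetP => v; rewrite !inE => v_z.
have [->|v_w] := eqVneq v w; first by rewrite swap_w w_top.
by rewrite ffunE tpermD 1?eq_sym // eqxx orbT.
Qed.

Lemma TC_pop_rel_closed mu mu' :
  mu \in TC P -> pop_rel P mu' mu -> mu' \in TC P.
Proof.
move=> + mu'mu; have /and3P [A_mu' _ _] := mu'mu.
rewrite [mu' \in _]inE A_mu' inE => /andP [_ /forall_inP mu_TC] /=.
by apply/forall_inP => lam A_lam; apply: connect_trans (connect1 mu'mu) _; apply: mu_TC.
Qed.

Hypothesis card_agents : #|N| = #|H|.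

Lemma TC1_top mu w h : TC P = [set mu] -> is_top P w h -> mu w = h.
Proof.
move=> TC_mu w_top; have mu_TC : mu \in TC P by rewrite TC_mu set11.
have A_mu : mu \in assignments N H by move: mu_TC; rewrite inE => /andP [].
have inj_mu : injective mu by move: A_mu; rewrite inE => /injectiveP.
have /codomP [z mu_z] : h \in codom mu by apply: inj_card_onto; rewrite ?card_agents.
apply/eqP; apply: contraT => mu_w.
have := TC_pop_rel_closed mu_TC (pop_rel_swap_to_top A_mu w_top (esym mu_z) mu_w).
rewrite TC_mu inE => /eqP swap_mu.
by move: mu_w; rewrite -swap_mu ffunE tpermL -mu_z eqxx.
Qed.

Lemma TC1_distinct_tops : #|TC P| = 1 -> distinct_tops P.
Proof.
move=> /eqP/cards1P [mu TC_mu] x y hx hy x_top y_top x_y.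
have /setP/(_ mu) := TC_mu; rewrite set11 !inE => /andP [/injectiveP inj_mu _].
by rewrite -(TC1_top TC_mu x_top) -(TC1_top TC_mu y_top) (inj_eq inj_mu).
Qed.

Lemma top_exists x : exists h, [forall h', (h' != h) ==> P x h h'].
Proof.
have /card_gt0P [h _] : 0 < #|H| by rewrite -card_agents; apply/card_gt0P; exists x.
exact: strict_linear_order_top h.
Qed.

Definition top_assignment : {ffun N -> H} :=
  [ffun x => xchoose (top_exists x)].

Lemma top_assignmentP x : is_top P x (top_assignment x).
Proof.
move=> h'; rewrite ffunE.
by have /forallP /(_ h') /implyP := xchooseP (top_exists x).
Qed.

Lemma Nwp_top_assignment lam : Nwp P top_assignment lam = setT.
Proof.
apply/setP => v; rewrite !inE.
have [//|lam_v] := eqVneq (top_assignment v) (lam v); first by rewrite orbT.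
by rewrite top_assignmentP // eq_sym.
Qed.

Lemma TC_distinct_tops : distinct_tops P -> TC P = [set top_assignment].
Proof.
move=> tops_distinct.
have A_top : top_assignment \in assignments N H.
  rewrite inE; apply/injectiveP => a b; apply: contra_eq => a_b.
  exact: tops_distinct (@top_assignmentP a) (@top_assignmentP b) a_b.
apply/setP => mu; rewrite inE in_set1; apply/andP/eqP => [[_]|->].
  move/forall_inP/(_ _ A_top); apply: connect_into_eq => lam.
  exact: unanimous_pop_rel_eq (Nwp_top_assignment lam).
split=> //; apply/forall_inP => lam A_lam; apply: connect1.
by rewrite /pop_rel A_top A_lam Nwp_top_assignment cardsT max_card.
Qed.

Lemma card_TC_eq1 : #|TC P| = 1 <-> distinct_tops P.
Proof.
split; first exact: TC1_distinct_tops.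
by move/TC_distinct_tops ->; rewrite cards1.
Qed.

End TopCycle.

Definition rev_profile (N H : finType) (P : N -> rel H) : N -> rel H :=
  fun x a b => P x b a.

Lemma rev_profileP (N H : finType) (P : N -> rel H) :
  is_profile P -> is_profile (rev_profile P).
Proof.
move=> P_profile x; case: (P_profile x) => irr [tr tot].
split=> //; split=> [a b c ba cb|a b a_b]; first exact: tr cb ba.
by rewrite orbC tot.
Qed.

Lemma BC_rev_profile (N H : finType) (P : N -> rel H) :
  BC P = TC (rev_profile P).
Proof.
apply/setP => mu; rewrite !inE; congr (_ && _); apply: eq_forallb => lam.
congr (_ ==> _); rewrite /pop_star.
transitivity (connect [rel a b | pop_rel P b a] mu lam); first by rewrite connect_rev.
apply: eq_connect => a b /=.
rewrite /pop_rel andbCA; congr [&& _, _ & _ <= _];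
  by congr #|pred_of_set _|; apply/setP => v; rewrite !inE eq_sym.
Qed.

Theorem lemmaB2 (N H : finType) (P : N -> rel H) :
  #|N| = #|H| -> is_profile P ->
  (#|TC P| = 1 <-> distinct_tops P) /\ (#|BC P| = 1 <-> distinct_bottoms P).
Proof.
move=> card_agents P_profile; split; first exact: card_TC_eq1.
(* [distinct_bottoms P] is convertible to [distinct_tops (rev_profile P)]. *)
by rewrite BC_rev_profile; apply: card_TC_eq1 => //; apply: rev_profileP.
Qed.
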